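(* Let $\mathcal{S}$ be a set of $q^3+1$ mutually opposite lines of a finite split Cayley hexagon $\mathsf{H}(q)$. Then every line of $\mathsf{H}(q)$ intersects some line of $\mathcal{S}$.
   Context: $\mathsf{H}(q)$ is the split Cayley hexagon, a generalised hexagon of order $(q,q)$, having $(q+1)(q^4+q^2+1)$ lines. Two lines are opposite if they are at distance $6$ in the incidence graph. *)

(* Concrete model of the split Cayley hexagon H(q), q = #|F|,
   following Tits / Van Maldeghem ("Generalized Polygons", 2.4.13):
   points  = all points of the parabolic quadric Q(6,q) : X0X4+X1X5+X2X6 = X3^2
             in PG(6,q);
   lines   = the lines of Q(6,q) whose Grassmann coordinates satisfy
             p12=p34, p54=p32, p20=p35, p65=p30, p01=p36, p46=p31.
   A subspace of F^7 is represented canonically by its row-space closure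
   <<L>>%MS : 'M[F]_7, so that distinct matrices = distinct subspaces. *)
From HB Require Import structures.
From mathcomp Require Import all_boot all_order all_algebra.
Set Implicit Arguments. Unset Strict Implicit. Unset Printing Implicit Defensive.
Import Order.TTheory GRing.Theory.
Local Open Scope ring_scope.

Section Hexagon.
Variable F : finFieldType.

Definition xc (u : 'rV[F]_7) (i : nat) : F := u ord0 (inord i).

Definition Qform (u : 'rV[F]_7) : F :=
  xc u 0 * xc u 4 + xc u 1 * xc u 5 + xc u 2 * xc u 6 - xc u 3 ^+ 2.

Definition pg (u v : 'rV[F]_7) (i j : nat) : F := xc u i * xc v j - xc u j * xc v i.

Definition grass_ok (u v : 'rV[F]_7) : bool :=
  [&& pg u v 1 2 == pg u v 3 4, pg u v 5 4 == pg u v 3 2,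
      pg u v 2 0 == pg u v 3 5, pg u v 6 5 == pg u v 3 0,
      pg u v 0 1 == pg u v 3 6 & pg u v 4 6 == pg u v 3 1].

(* L (in canonical form) is a line of H(q): a 2-dimensional totally singular
   subspace of Q(6,q) whose Grassmann coordinates satisfy Tits' equations
   (these are homogeneous, so checking them for all pairs u, v in L is the
   same as checking them on a basis). *)
Definition is_hline (L : 'M[F]_7) : bool :=
  [&& (<<L>>%MS == L), \rank L == 2%N,
      [forall u : 'rV[F]_7, (u <= L)%MS ==> (Qform u == 0)] &
      [forall u : 'rV[F]_7, forall v : 'rV[F]_7,
          ((u <= L)%MS && (v <= L)%MS) ==> grass_ok u v]].

Definition meets (L M : 'M[F]_7) : bool := (L :&: M)%MS != 0.

(* lines_within k L M : the lines L, M are at distance <= 2k in the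
   point-line incidence graph of H(q). *)
Fixpoint lines_within (k : nat) (L M : 'M[F]_7) : bool :=
  if k is k'.+1 then
    (L == M) || [exists N : 'M[F]_7, [&& is_hline N, meets L N & lines_within k' N M]]
  else L == M.

Definition opposite (L M : 'M[F]_7) : bool :=
  lines_within 3 L M && ~~ lines_within 2 L M.

End Hexagon.

From HB Require Import structures.
From mathcomp Require Import all_boot all_order all_algebra.
From mathcomp Require Import ring zify.
Set Implicit Arguments. Unset Strict Implicit. Unset Printing Implicit Defensive.
Import Order.TTheory GRing.Theory.
Local Open Scope ring_scope.

(* Double counting. A line M of H(q) has q^2 - 1 nonzero vectors, each on q lines other
   than M, and another line shares at most q - 1 of them with M; so M meets at least
   q^2 + q + 1 lines, itself included. Two lines of S meeting a common line would be at
   distance at most 4, so every line meets at most one line of S. If L met none, the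
   lines of S would meet (q^3 + 1)(q^2 + q + 1) distinct lines other than L, whereas
   H(q) has at most that many lines: each of the at most q^6 - 1 nonzero singular
   vectors of Q(6,q) lies on exactly q + 1 lines, and each line carries q^2 - 1 of them.
   The q + 1 lines through a singular u are found from the q^3 vectors v with which u
   spans a line of H(q) or which are multiples of u: where the coordinate X0 of u is
   nonzero these v are parametrised by their coordinates X0, X5, X6, and symmetries of
   Q(6,q) preserving the line equations move any other nonzero coordinate to X0. *)

Lemma card_set_sum (T : finType) (A : {pred T}) (P : pred T) :
  #|[set x in A | P x]| = (\sum_(x in A) P x)%N.
Proof.
rewrite -sum1_card big_mkcond [RHS]big_mkcond /=.
by apply: eq_bigr => x _; rewrite inE; case: (x \in A); case: (P x).
Qed.

Lemma double_counting (T U : finType) (A : {pred T}) (B : {pred U}) (R : T -> U -> bool) :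
  (\sum_(x in A) #|[set y in B | R x y]| = \sum_(y in B) #|[set x in A | R x y]|)%N.
Proof.
under eq_bigr do rewrite card_set_sum.
by rewrite exchange_big; under [RHS]eq_bigr do rewrite card_set_sum.
Qed.

Section FiniteFieldCounting.
Variable F : finFieldType.
Local Notation q := #|F|.

Lemma card_submx n m (A : 'M[F]_(m, n)) :
  #|[set v : 'rV[F]_n | (v <= A)%MS]| = (q ^ \rank A)%N.
Proof.
rewrite -[\rank A]mul1n -card_mx.
have injA : injective (mulmxr (row_base A) : 'rV_(\rank A) -> 'rV_n).
  have /row_freeP[A' A'K] := row_base_free A.
  by apply: can_inj (mulmxr A') _ => u; rewrite /= -mulmxA A'K mulmx1.
rewrite -(card_image injA); apply: eq_card => v.
by rewrite inE -(eq_row_base A) (sameP submxP codomP).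
Qed.

Lemma card_nonzero_submx n m (A : 'M[F]_(m, n)) :
  #|[set v : 'rV[F]_n | (v != 0) && (v <= A)%MS]| = (q ^ \rank A).-1.
Proof.
rewrite -card_submx [in RHS](cardsD1 0) inE sub0mx /=.
by apply: eq_card => v; rewrite !inE.
Qed.

Lemma sum_mul_eq (d : F) :
  (\sum_(a : F) \sum_(b : F) ((a * b)%R == d : nat) = q.-1 + q * (d == 0%R))%N.
Proof.
rewrite (bigD1 0) //= addnC; congr (_ + _)%N.
  transitivity (\sum_(a : F | a != 0%R) 1)%N.
    apply: eq_bigr => a a_neq0.
    rewrite (bigD1 (d / a)) //= mulrC divfK // eqxx big1 // => b b_neq.
    by apply/eqP; rewrite eqb0; apply: contra b_neq => /eqP <-; rewrite mulrC mulKf.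
  by rewrite sum1dep_card -(cardsC1 (0 : F)); apply: eq_card => x; rewrite !inE.
by under eq_bigr do rewrite mul0r eq_sym; rewrite sum_nat_const mulnC.
Qed.

Lemma card_mul_eq_fun (T : finType) (c : T -> F) :
  #|[set x : T * F * F | x.1.2 * x.2 == c x.1.1]| =
    (#|T| * q.-1 + q * #|[set t | c t == 0%R]|)%N.
Proof.
transitivity (\sum_(t : T) \sum_(a : F) \sum_(b : F) ((a * b)%R == c t : nat))%N.
  by rewrite pair_bigA pair_bigA; exact: card_set_sum predT _.
under eq_bigr do rewrite sum_mul_eq.
rewrite big_split /= sum_nat_const -big_distrr /=; congr (_ + _ * _)%N.
by rewrite (card_set_sum predT).
Qed.

Lemma q_gt1 : (1 < q)%N. Proof. exact: card_finNzRing_gt1. Qed.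

Lemma card_sub_mul_eq0 (T : finType) (c : T -> F) k :
  #|T| = (q ^ k.+1)%N -> #|[set t | c t == 0%R]| = (q ^ k)%N ->
  #|[set x : T * F * F | c x.1.1 - x.1.2 * x.2 == 0]| = (q ^ k.+2)%N.
Proof.
move=> card_T card_c0.
have -> : [set x : T * F * F | c x.1.1 - x.1.2 * x.2 == 0] = [set x | x.1.2 * x.2 == c x.1.1].
  by apply/setP => x; rewrite !inE subr_eq0 eq_sym.
rewrite card_mul_eq_fun card_T card_c0 !expnS; have := q_gt1.
by move: (q ^ k)%N => p; nia.
Qed.
End FiniteFieldCounting.

Section RowSpans.
Variables (F : fieldType) (n : nat).
Implicit Types u v x : 'rV[F]_n.

Lemma sub_adds_rVP x u v : (x <= u + v)%MS -> exists a b, x = a *: u + b *: v.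
Proof.
case/sub_addsmxP => w ->.
have /sub_rVP[a ->] : (w.1 *m u <= u)%MS by apply: submxMl.
have /sub_rVP[b ->] : (w.2 *m v <= v)%MS by apply: submxMl.
by exists a, b.
Qed.

Lemma rank_adds_rV u v : u != 0 -> ~~ (v <= u)%MS -> \rank (u + v)%MS = 2%N.
Proof.
move=> u_neq0 v_notin_u; apply/eqP; rewrite eqn_leq; apply/andP; split.
  apply: leq_trans (mxrank_adds_leqif u v) _.
  by rewrite !rank_rV; case: (_ != 0); case: (_ != 0).
rewrite ltnNge; apply: contra v_notin_u => le_uv_1.
apply: submx_trans (addsmxSr u v) _; have [_ <-] := mxrank_leqif_sup (addsmxSl u v).
have rank_u : \rank u = 1%N by rewrite rank_rV u_neq0.
by rewrite eqn_leq rank_u le_uv_1 -{1}rank_u mxrankS // addsmxSl.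
Qed.
End RowSpans.

(* Proves [x = y] from [h : C = D] when [x - y = s * (C - D)] is a field identity. *)
Ltac lincomb h s := match type of h with ?C = ?D =>
  apply/eqP; rewrite -subr_eq0; apply/eqP;
  transitivity (s * (C - D)); [by field | by rewrite h subrr mulr0] end.

Section Coordinates.
Variable F : finFieldType.
Implicit Types u v : 'rV[F]_7.

Definition row7 (a0 a1 a2 a3 a4 a5 a6 : F) : 'rV[F]_7 :=
  \row_(i < 7) nth 0 [:: a0; a1; a2; a3; a4; a5; a6] i.

Lemma xc_row7 a0 a1 a2 a3 a4 a5 a6 i : (i < 7)%N ->
  xc (row7 a0 a1 a2 a3 a4 a5 a6) i = nth 0 [:: a0; a1; a2; a3; a4; a5; a6] i.
Proof. by move=> lti; rewrite /xc !mxE inordK. Qed.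

Lemma xc_inj u v : (forall i, (i < 7)%N -> xc u i = xc v i) -> u = v.
Proof.
by move=> eq_uv; apply/rowP => i; have := eq_uv i (ltn_ord i); rewrite /xc inord_val.
Qed.

Lemma xc0 i : xc (0 : 'rV[F]_7) i = 0. Proof. by rewrite /xc mxE. Qed.
Lemma xcD u v i : xc (u + v) i = xc u i + xc v i. Proof. by rewrite /xc mxE. Qed.
Lemma xcZ a u i : xc (a *: u) i = a * xc u i. Proof. by rewrite /xc mxE. Qed.

Definition polarQ u v : F :=
  xc u 0 * xc v 4 + xc u 4 * xc v 0 + xc u 1 * xc v 5 + xc u 5 * xc v 1
  + xc u 2 * xc v 6 + xc u 6 * xc v 2 - 2 * xc u 3 * xc v 3.

Lemma polarQE u v : polarQ u v = Qform (u + v) - Qform u - Qform v.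
Proof. by rewrite /polarQ /Qform !xcD; ring. Qed.

Lemma QformDZ a b u v :
  Qform (a *: u + b *: v) = a ^+ 2 * Qform u + b ^+ 2 * Qform v + a * b * polarQ u v.
Proof. by rewrite /Qform /polarQ !xcD !xcZ; ring. Qed.

Lemma pgDZ a b c d u v i j :
  pg (a *: u + b *: v) (c *: u + d *: v) i j = (a * d - b * c) * pg u v i j.
Proof. by rewrite /pg !xcD !xcZ; ring. Qed.

(* For singular [u] and [v] with [v] not a multiple of [u]: [u] and [v] span a line of
   H(q). *)
Definition hcollinear u v := grass_ok u v && (polarQ u v == 0).

Lemma hcollinear_scale u a : Qform u = 0 -> hcollinear u (a *: u).
Proof.
move=> Qu; apply/andP; split.
  by rewrite /grass_ok /pg !xcZ; repeat (apply/andP; split); apply/eqP; ring.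
have -> : polarQ u (a *: u) = 2 * a * Qform u by rewrite /polarQ /Qform !xcZ; ring.
by rewrite Qu mulr0.
Qed.

(* Solving the equations p20 = p35, p54 = p32, p01 = p36 and polarQ u v = 0 for the
   coordinates X3, X2, X1, X4 of v, in this order, when X0 of u is nonzero. *)
Definition chart3 u (a b c : F) := (xc u 3 * a - xc u 6 * b + xc u 5 * c) / xc u 0.
Definition chart2 u (a b c : F) :=
  (xc u 2 * a - xc u 3 * b + xc u 5 * chart3 u a b c) / xc u 0.
Definition chart1 u (a b c : F) :=
  (xc u 1 * a + xc u 3 * c - xc u 6 * chart3 u a b c) / xc u 0.
Definition chart4 u (a b c : F) :=
  - (xc u 4 * a + xc u 1 * b + xc u 5 * chart1 u a b c + xc u 2 * c
     + xc u 6 * chart2 u a b c - 2 * xc u 3 * chart3 u a b c) / xc u 0.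
Definition chart u a b c :=
  row7 a (chart1 u a b c) (chart2 u a b c) (chart3 u a b c) (chart4 u a b c) b c.

Lemma hcollinear_chart u v : xc u 0 != 0 -> hcollinear u v ->
  v = chart u (xc v 0) (xc v 5) (xc v 6).
Proof.
move=> u0 /andP[/and5P[_ _ E20 E54 /andP[E01 _]] /eqP Epolar].
move/eqP: E20; move/eqP: E54; move/eqP: E01; rewrite /pg => E01 E54 E20.
have v3 : xc v 3 = chart3 u (xc v 0) (xc v 5) (xc v 6).
  by rewrite /chart3; lincomb E54 (1 / xc u 0).
have v2 : xc v 2 = chart2 u (xc v 0) (xc v 5) (xc v 6).
  by rewrite /chart2 -v3; lincomb E20 (-1 / xc u 0).
have v1 : xc v 1 = chart1 u (xc v 0) (xc v 5) (xc v 6).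
  by rewrite /chart1 -v3; lincomb E01 (1 / xc u 0).
have v4 : xc v 4 = chart4 u (xc v 0) (xc v 5) (xc v 6).
  by rewrite /chart4 -v3 -v2 -v1; move: Epolar; rewrite /polarQ => E; lincomb E (1 / xc u 0).
by apply: xc_inj => -[|[|[|[|[|[|[|i]]]]]]] // _; rewrite xc_row7.
Qed.

Lemma chart_hcollinear u a b c : Qform u = 0 -> xc u 0 != 0 ->
  hcollinear u (chart u a b c) /\ Qform (chart u a b c) = 0.
Proof.
move=> Qu u0.
have u4 : xc u 4 = (xc u 3 ^+ 2 - xc u 1 * xc u 5 - xc u 2 * xc u 6) / xc u 0.
  by move: Qu; rewrite /Qform => Qu; lincomb Qu (1 / xc u 0).
rewrite /hcollinear /grass_ok /pg /polarQ /Qform /chart !xc_row7 //=.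
rewrite /chart4 /chart1 /chart2 /chart3 u4.
by split; [repeat (apply/andP; split); apply/eqP; field | field].
Qed.
End Coordinates.

Section Symmetries.
Variable F : finFieldType.
Implicit Types u v : 'rV[F]_7.
Local Notation q := #|F|.

Definition rot3 v := row7 (xc v 2) (xc v 0) (xc v 1) (xc v 3) (xc v 6) (xc v 4) (xc v 5).
Definition swap v := row7 (xc v 4) (xc v 5) (xc v 6) (- xc v 3) (xc v 0) (xc v 1) (xc v 2).

Lemma rot3K v : rot3 (rot3 (rot3 v)) = v.
Proof. by apply: xc_inj => -[|[|[|[|[|[|[|i]]]]]]] // _; rewrite /rot3 !xc_row7. Qed.

Lemma swapK : involutive swap.
Proof.
by move=> v; apply: xc_inj => -[|[|[|[|[|[|[|i]]]]]]] // _; rewrite /swap !xc_row7 //= opprK.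
Qed.

Lemma Qform_rot3 v : Qform (rot3 v) = Qform v.
Proof. by rewrite /Qform /rot3 !xc_row7 //=; ring. Qed.

Lemma Qform_swap v : Qform (swap v) = Qform v.
Proof. by rewrite /Qform /swap !xc_row7 //=; ring. Qed.

Lemma hcollinear_rot3 u v : hcollinear u v -> hcollinear (rot3 u) (rot3 v).
Proof.
move=> /andP[/and5P[/eqP E1 /eqP E2 /eqP E3 /eqP E4 /andP[/eqP E5 /eqP E6]] /eqP EB].
move: E1 E2 E3 E4 E5 E6 EB; rewrite /pg /polarQ => E1 E2 E3 E4 E5 E6 EB.
rewrite /hcollinear /grass_ok /pg /polarQ /rot3 !xc_row7 //=.
by repeat (apply/andP; split); apply/eqP;
  [lincomb E5 (1 : F) | lincomb E6 (1 : F) | lincomb E1 (1 : F) | lincomb E2 (1 : F)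
  | lincomb E3 (1 : F) | lincomb E4 (1 : F) | lincomb EB (1 : F)].
Qed.

Lemma hcollinear_swap u v : hcollinear u v -> hcollinear (swap u) (swap v).
Proof.
move=> /andP[/and5P[/eqP E1 /eqP E2 /eqP E3 /eqP E4 /andP[/eqP E5 /eqP E6]] /eqP EB].
move: E1 E2 E3 E4 E5 E6 EB; rewrite /pg /polarQ => E1 E2 E3 E4 E5 E6 EB.
rewrite /hcollinear /grass_ok /pg /polarQ /swap !xc_row7 //=.
by repeat (apply/andP; split); apply/eqP;
  [lincomb E4 (-1 : F) | lincomb E5 (-1 : F) | lincomb E6 (-1 : F) | lincomb E1 (-1 : F)
  | lincomb E2 (-1 : F) | lincomb E3 (-1 : F) | lincomb EB (1 : F)].
Qed.

Definition hperp_spec u : Prop :=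
  #|[set v | hcollinear u v]| = (q ^ 3)%N /\ forall v, hcollinear u v -> Qform v = 0.

Lemma hperp_spec_transport (g h : 'rV[F]_7 -> 'rV[F]_7) u :
  cancel g h -> cancel h g ->
  (forall x y, hcollinear x y -> hcollinear (g x) (g y)) ->
  (forall x y, hcollinear x y -> hcollinear (h x) (h y)) ->
  (forall x, Qform (g x) = Qform x) -> hperp_spec (g u) -> hperp_spec u.
Proof.
move=> gK hK g_coll h_coll Qg [card_gu sing_gu]; split.
  rewrite -card_gu -(card_imset _ (can_inj gK)); apply: eq_card => w.
  rewrite [in RHS]inE; apply/imsetP/idP => [[v]|uw].
    by rewrite inE => uv ->; exact: g_coll.
  by exists (h w); [rewrite inE; have := h_coll _ _ uw; rewrite gK | rewrite hK].
by move=> v uv; rewrite -Qg; apply: sing_gu; exact: g_coll.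
Qed.

Lemma hperp_spec_chart u : Qform u = 0 -> xc u 0 != 0 -> hperp_spec u.
Proof.
move=> Qu u0; split; last first.
  move=> v uv; rewrite (hcollinear_chart u0 uv).
  by case: (chart_hcollinear (xc v 0) (xc v 5) (xc v 6) Qu u0).
have -> : [set v | hcollinear u v] = [set chart u t.1.1 t.1.2 t.2 | t : F * F * F].
  apply/setP => v; rewrite inE; apply/idP/imsetP => [uv|[t _ ->]].
    by exists (xc v 0, xc v 5, xc v 6); [rewrite inE | exact: hcollinear_chart].
  by case: (chart_hcollinear t.1.1 t.1.2 t.2 Qu u0).
rewrite card_imset ?cardsT ?card_prod ?expnS ?expn0 ?muln1 ?mulnA //.
move=> [[a b] c] [[a' b'] c'] eq_chart.
have := congr1 (fun x => (xc x 0, xc x 5, xc x 6)) eq_chart.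
by rewrite /chart /= !xc_row7.
Qed.

Lemma hperp_spec_rot3 u : hperp_spec (rot3 u) -> hperp_spec u.
Proof.
apply: (hperp_spec_transport (h := rot3 \o rot3)) => //=.
- by move=> x /=; rewrite rot3K.
- by move=> x /=; rewrite rot3K.
- exact: hcollinear_rot3.
- by move=> x y /hcollinear_rot3 /hcollinear_rot3.
- exact: Qform_rot3.
Qed.

Lemma hperp_spec_swap u : hperp_spec (swap u) -> hperp_spec u.
Proof.
apply: (hperp_spec_transport swapK swapK); [exact: hcollinear_swap..|exact: Qform_swap].
Qed.

(* Every nonzero singular vector has a nonzero coordinate among X0, X1, X2, X4, X5, X6,
   and rot3 and swap move that coordinate to X0. *)
Lemma hperp_specP u : Qform u = 0 -> u != 0 -> hperp_spec u.
Proof.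
move=> Qu u_neq0.
have [u0|] := eqVneq (xc u 0) 0; last exact: hperp_spec_chart.
have [u1|u1] := eqVneq (xc u 1) 0; last first.
  by do 2!apply: hperp_spec_rot3; apply: hperp_spec_chart; rewrite ?Qform_rot3 // /rot3 !xc_row7.
have [u2|u2] := eqVneq (xc u 2) 0; last first.
  by apply: hperp_spec_rot3; apply: hperp_spec_chart; rewrite ?Qform_rot3 // /rot3 !xc_row7.
have [u4|u4] := eqVneq (xc u 4) 0; last first.
  by apply: hperp_spec_swap; apply: hperp_spec_chart; rewrite ?Qform_swap // /swap !xc_row7.
have [u5|u5] := eqVneq (xc u 5) 0; last first.
  apply: hperp_spec_swap; do 2!apply: hperp_spec_rot3; apply: hperp_spec_chart;
  by rewrite ?Qform_rot3 ?Qform_swap // /rot3 /swap !xc_row7.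
have [u6|u6] := eqVneq (xc u 6) 0; last first.
  apply: hperp_spec_swap; apply: hperp_spec_rot3; apply: hperp_spec_chart;
  by rewrite ?Qform_rot3 ?Qform_swap // /rot3 /swap !xc_row7.
have u3 : xc u 3 = 0.
  by move: Qu; rewrite /Qform u0 u1 u2 !mul0r !add0r => /eqP; rewrite oppr_eq0 expf_eq0 => /eqP.
by case/eqP: u_neq0; apply: xc_inj => -[|[|[|[|[|[|[|i]]]]]]] // _; rewrite xc0.
Qed.
End Symmetries.

Section Lines.
Variable F : finFieldType.
Implicit Types (u v : 'rV[F]_7) (L M N : 'M[F]_7).
Local Notation q := #|F|.

Lemma hline_singular L u : is_hline L -> (u <= L)%MS -> Qform u = 0.
Proof. by case/and4P => _ _ /forallP /(_ u) /implyP sing_L _ /sing_L /eqP. Qed.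

Lemma hline_rank L : is_hline L -> \rank L = 2%N.
Proof. by case/and4P => _ /eqP. Qed.

Lemma hline_genmx L : is_hline L -> <<L>>%MS = L.
Proof. by case/and4P => /eqP. Qed.

Lemma hline_hcollinear L u v : is_hline L -> (u <= L)%MS -> (v <= L)%MS -> hcollinear u v.
Proof.
move=> hL uL vL; apply/andP; split.
  by case/and4P: hL => _ _ _ /forallP /(_ u) /forallP /(_ v) /implyP; apply; rewrite uL.
by rewrite polarQE !(hline_singular hL) ?addmx_sub // !subr0.
Qed.

Lemma hline_adds u v : Qform u = 0 -> Qform v = 0 -> hcollinear u v ->
  u != 0 -> ~~ (v <= u)%MS -> is_hline <<(u + v)%MS>>%MS.
Proof.
move=> Qu Qv /andP[grass_uv /eqP polar_uv] u_neq0 v_notin_u; apply/and4P; split.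
- by rewrite genmx_id.
- by rewrite genmxE rank_adds_rV.
- apply/forallP => x; apply/implyP; rewrite genmxE => /sub_adds_rVP[a [b ->]].
  by rewrite QformDZ Qu Qv polar_uv !mulr0 !addr0.
- apply/forallP => x; apply/forallP => y; apply/implyP; rewrite !genmxE.
  case/andP => /sub_adds_rVP[a [b ->]] /sub_adds_rVP[c [d ->]].
  move: grass_uv; rewrite /grass_ok !pgDZ.
  by case/and5P => /eqP-> /eqP-> /eqP-> /eqP-> /andP[/eqP-> /eqP->]; rewrite !eqxx.
Qed.

Lemma hline_adds_eq L u v : is_hline L -> (u <= L)%MS -> (v <= L)%MS ->
  u != 0 -> ~~ (v <= u)%MS -> L = <<(u + v)%MS>>%MS.
Proof.
move=> hL uL vL u_neq0 v_notin_u; rewrite -(hline_genmx hL); symmetry; apply/genmxP.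
have uvL : (u + v <= L)%MS by rewrite addsmx_sub uL vL.
have [_ <-] := mxrank_leqif_eq uvL.
by rewrite rank_adds_rV // (hline_rank hL).
Qed.

Lemma hline_cap_rank L N : is_hline L -> is_hline N -> L != N -> (\rank (L :&: N) <= 1)%N.
Proof.
move=> hL hN; apply: contraNleq => rank_cap; apply/eqP.
have sub_cap K : is_hline K -> (L :&: N <= K)%MS -> (K <= L :&: N)%MS.
  move=> hK capK; have [_ <-] := mxrank_leqif_sup capK.
  by rewrite eqn_leq (mxrankS capK) (hline_rank hK).
rewrite -(hline_genmx hL) -(hline_genmx hN); apply/genmxP/andP; split.
  exact: submx_trans (sub_cap L hL (capmxSl L N)) (capmxSr L N).
exact: submx_trans (sub_cap N hN (capmxSr L N)) (capmxSl L N).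
Qed.

Lemma card_hcollinear_indep u : Qform u = 0 -> u != 0 ->
  #|[set v | hcollinear u v && ~~ (v <= u)%MS]| = (q ^ 3 - q)%N.
Proof.
move=> Qu u_neq0; have [card_perp _] := hperp_specP Qu u_neq0.
have -> : [set v | hcollinear u v && ~~ (v <= u)%MS] =
    [set v | hcollinear u v] :\: [set v | (v <= u)%MS].
  by apply/setP => v; rewrite !inE andbC.
rewrite cardsDS ?card_perp ?card_submx ?rank_rV ?u_neq0 //.
by apply/subsetP => v; rewrite !inE => /sub_rVP[a ->]; apply: hcollinear_scale.
Qed.

Lemma card_hlines_through u : Qform u = 0 -> u != 0 ->
  #|[set L | is_hline L && (u <= L)%MS]| = q.+1.
Proof.
move=> Qu u_neq0; have [_ sing_perp] := hperp_specP Qu u_neq0.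
set Ls := [set L | _]; set D := [set v | hcollinear u v && ~~ (v <= u)%MS].
have one_line v : v \in D -> #|[set L in Ls | (v <= L)%MS]| = 1%N.
  rewrite inE => /andP[uv v_notin_u].
  rewrite -[RHS](cards1 <<(u + v)%MS>>%MS); apply: eq_card => L; rewrite !inE.
  apply/idP/eqP => [/andP[/andP[hL uL] vL] | ->]; first exact: hline_adds_eq.
  by rewrite (hline_adds Qu (sing_perp v uv)) ?genmxE ?addsmxSl ?addsmxSr.
have line_D L : L \in Ls -> #|[set v in D | (v <= L)%MS]| = (q ^ 2 - q)%N.
  rewrite inE => /andP[hL uL].
  have -> : [set v in D | (v <= L)%MS] = [set v | (v <= L)%MS] :\: [set v | (v <= u)%MS].
    apply/setP => v; rewrite !inE.
    apply/idP/idP => [/andP[/andP[_ ->] ->] // | /andP[-> vL]].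
    by rewrite (hline_hcollinear hL uL vL) vL.
  rewrite cardsDS ?card_submx ?rank_rV ?u_neq0 ?(hline_rank hL) //.
  by apply/subsetP => v; rewrite !inE => /submx_trans; apply.
have := double_counting D Ls (fun v L => (v <= L)%MS).
rewrite (eq_bigr _ one_line) (eq_bigr _ line_D) !sum_nat_const muln1.
rewrite card_hcollinear_indep // => key; have q1 := q_gt1 F.
apply/eqP; rewrite -(@eqn_pmul2r (q ^ 2 - q)) -?key; rewrite !expnS expn0 !muln1; nia.
Qed.

(* [- Qform] is [((X3^2 - X2 X6) - X1 X5) - X0 X4]: peel off one hyperbolic pair at a
   time. *)
Lemma card_quadric_le : (#|[set u : 'rV[F]_7 | Qform u == 0%R]| <= q ^ 6)%N.
Proof.
pose c1 (x : F * F * F) := x.1.1 ^+ 2 - x.1.2 * x.2.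
pose c2 (x : F * F * F * F * F) := c1 x.1.1 - x.1.2 * x.2.
pose c3 (x : F * F * F * F * F * F * F) := c2 x.1.1 - x.1.2 * x.2.
have card_c1 : #|[set x | c1 x == 0]| = (q ^ 2)%N.
  apply: (card_sub_mul_eq0 (c := fun t : F => t ^+ 2) (k := 0)); first by rewrite expn1.
  by rewrite -[RHS](cards1 (0 : F)); apply: eq_card => t; rewrite !inE expf_eq0.
have card_c2 : #|[set x | c2 x == 0]| = (q ^ 4)%N.
  apply: (card_sub_mul_eq0 (c := c1) (k := 2)) => //.
  by rewrite !card_prod !expnS expn0 muln1 !mulnA.
have card_c3 : #|[set x | c3 x == 0]| = (q ^ 6)%N.
  apply: (card_sub_mul_eq0 (c := c2) (k := 4)) => //.
  by rewrite !card_prod !expnS expn0 muln1 !mulnA.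
pose h u := (xc u 3, xc u 2, xc u 6, xc u 1, xc u 5, xc u 0, xc u 4).
have h_inj : injective h.
  by move=> u v [? ? ? ? ? ? ?]; apply: xc_inj => -[|[|[|[|[|[|[|i]]]]]]].
rewrite -card_c3 -(card_imset _ h_inj).
apply/subset_leq_card/subsetP => _ /imsetP[u Qu ->].
rewrite inE in Qu; rewrite inE.
have -> : c3 (h u) = - Qform u by rewrite /c3 /c2 /c1 /Qform /=; ring.
by rewrite oppr_eq0.
Qed.

Lemma card_hlines_le :
  (#|[set L : 'M[F]_7 | is_hline L]| <= (q ^ 3 + 1) * (q ^ 2 + q + 1))%N.
Proof.
set B := [set L | is_hline L]; set A := [set u : 'rV[F]_7 | (u != 0) && (Qform u == 0)].
have through u : u \in A -> #|[set L in B | (u <= L)%MS]| = q.+1.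
  rewrite inE => /andP[u_neq0 /eqP Qu]; rewrite -(card_hlines_through Qu u_neq0).
  by apply: eq_card => L; rewrite !inE.
have on_line L : L \in B -> #|[set u in A | (u <= L)%MS]| = (q ^ 2).-1.
  rewrite inE => hL; have := card_nonzero_submx L; rewrite (hline_rank hL) => <-.
  apply: eq_card => u; rewrite !inE; apply/idP/idP => [/andP[/andP[-> _] ->] // |].
  by case/andP=> -> uL; rewrite (hline_singular hL uL) eqxx uL.
have := double_counting A B (fun u L => (u <= L)%MS).
rewrite (eq_bigr _ through) (eq_bigr _ on_line) !sum_nat_const => key.
have card_A : (#|A| <= (q ^ 6).-1)%N.
  have Qform0 : Qform (0 : 'rV[F]_7) = 0 by rewrite /Qform !xc0; ring.
  have := card_quadric_le; rewrite (cardsD1 0) inE Qform0 eqxx => card_Q.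
  rewrite -ltnS prednK ?expn_gt0 ?(ltnW (q_gt1 F)) // (leq_trans _ card_Q) // ltnS.
  by apply: subset_leq_card; apply/subsetP => u; rewrite !inE.
have q1 := q_gt1 F.
rewrite -(@leq_pmul2r (q ^ 2).-1); last by rewrite -subn1 subn_gt0 (ltn_sqr 1).
rewrite -key (leq_trans (leq_mul card_A (leqnn q.+1))) //.
rewrite !expnS expn0 !muln1; move: q q1 => n n_gt1; rewrite -!subn1; nia.
Qed.

Lemma meetsC L M : meets L M = meets M L.
Proof. by rewrite /meets -!mxrank_eq0 capmxC. Qed.

Lemma hline_meets_refl M : is_hline M -> meets M M.
Proof.
move=> hM; move/capmx_idPl: (submx_refl M) => capMM.
by rewrite /meets -mxrank_eq0 capMM (hline_rank hM).
Qed.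

Lemma card_hlines_meeting M : is_hline M ->
  (q ^ 2 + q + 1 <= #|[set N | is_hline N && meets M N]|)%N.
Proof.
move=> hM; have q1 := q_gt1 F.
set A := [set u : 'rV[F]_7 | (u != 0) && (u <= M)%MS].
set B := [set N | is_hline N && (N != M)].
set C := [set N in B | meets M N].
have through u : u \in A -> #|[set N in B | (u <= N)%MS]| = q.
  rewrite inE => /andP[u_neq0 uM].
  have := card_hlines_through (hline_singular hM uM) u_neq0.
  rewrite (cardsD1 M) inE hM uM /= => -[<-]; apply: eq_card => N; rewrite !inE.
  by case: (N == M); case: (is_hline N); case: (u <= N)%MS.
have on_line N : N \in B -> (#|[set u in A | (u <= N)%MS]| <= meets M N * q.-1)%N.
  rewrite inE eq_sym => /andP[hN M_neq_N].
  have -> : [set u in A | (u <= N)%MS] = [set u | (u != 0) && (u <= M :&: N)%MS].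
    by apply/setP => u; rewrite !inE sub_capmx andbA.
  rewrite card_nonzero_submx /meets -mxrank_eq0.
  have := hline_cap_rank hM hN (M_neq_N : M != N).
  by case: (\rank (M :&: N)) => [|[|r]] //= _; rewrite expn1 mul1n.
have card_A : #|A| = (q ^ 2).-1 by have := card_nonzero_submx M; rewrite (hline_rank hM).
have card_C : (q.+1 * q <= #|C|)%N.
  rewrite -(@leq_pmul2r q.-1); last by rewrite -subn1 subn_gt0.
  apply: leq_trans (_ : #|A| * q <= #|C| * q.-1)%N.
    by rewrite card_A !expnS expn0 muln1 -!subn1; nia.
  rewrite -sum_nat_const -(eq_bigr _ through) double_counting card_set_sum big_distrl.
  exact: leq_sum on_line.
rewrite (cardsD1 M) inE hM hline_meets_refl //= add1n.
have -> : [set N | is_hline N && meets M N] :\ M = C.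
  by apply/setP => N; rewrite !inE; case: (N == M); case: (is_hline N).
by move: card_C; rewrite expnS expn1 mulSn; move: #|C| q => c n; lia.
Qed.
End Lines.

Lemma lines_within2_meets (F : finFieldType) (L N M : 'M[F]_7) :
  is_hline N -> is_hline M -> meets L N -> meets N M -> lines_within 2 L M.
Proof.
move=> hN hM LN NM /=; apply/orP; right; apply/existsP; exists N; rewrite hN LN /=.
by apply/orP; right; apply/existsP; exists M; rewrite hM NM eqxx.
Qed.

Lemma card_opposite_meeting_le1 (F : finFieldType) (S : {set 'M[F]_7}) (N : 'M[F]_7) :
  (forall L, L \in S -> is_hline L) ->
  (forall L M, L \in S -> M \in S -> L != M -> opposite L M) ->
  is_hline N -> (#|[set M in S | meets M N]| <= 1)%N.
Proof.
move=> lineS oppS hN; rewrite leqNgt; apply/card_gt1P => -[L [M []]].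
rewrite !inE => /andP[LS LN] /andP[MS MN] /(oppS L M LS MS) /andP[_].
by rewrite (lines_within2_meets hN (lineS M MS) LN) // meetsC.
Qed.

Unset Implicit Arguments.
Theorem mainTheorem5 (F : finFieldType) (S : {set 'M[F]_7}) :
  (forall L, L \in S -> is_hline L) ->
  #|S| = (#|F| ^ 3).+1 ->
  (forall L M, L \in S -> M \in S -> L != M -> opposite L M) ->
  forall L : 'M[F]_7, is_hline L -> exists2 M, M \in S & meets L M.
Proof.
move=> lineS cardS oppS L lineL.
have [/exists_inP[M MS LM]|/exists_inPn no_meet] := boolP [exists M in S, meets L M].
  by exists M.
exfalso; set B := [set N : 'M[F]_7 | is_hline N].
have lower : (#|S| * (#|F| ^ 2 + #|F| + 1) <= \sum_(N in B) #|[set M in S | meets M N]|)%N.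
  rewrite -double_counting -sum_nat_const; apply: leq_sum => M MS.
  apply: leq_trans (card_hlines_meeting (lineS M MS)) _.
  by apply/subset_leq_card/subsetP => N; rewrite !inE.
have upper : (\sum_(N in B) #|[set M in S | meets M N]| <= #|B|.-1)%N.
  rewrite (bigD1 L) ?inE //= (_ : #|_| = 0%N) ?add0n; last first.
    apply: eq_card0 => M; rewrite !inE meetsC.
    by case MS: (M \in S); rewrite //= (negbTE (no_meet M MS)).
  apply: (@leq_trans (\sum_(N in B | N != L) 1)%N).
    by apply: leq_sum => N /andP[hN _]; rewrite inE in hN; exact: card_opposite_meeting_le1.
  rewrite sum1dep_card (cardsD1 L B) inE lineL add1n /=.
  by apply: eq_leq; apply: eq_card => N; rewrite !inE andbC.
have := leq_trans lower upper; rewrite cardS.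
have := card_hlines_le F; move: #|B| #|F| => b n; nia.
Qed.
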